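(* Let $\alpha\in(0,1)$ and let $n\ge r\ge 1$ be integers. If $P\in\mathbb{P}_\alpha^{n\times n}$, then for every matrix $M\in\mathbb{R}^{n\times r}$ with $\operatorname{rank}(M)=r$ one has $M^{\mathrm T}PM\in\mathbb{P}_\alpha^{r\times r}$.
   Context: For $\alpha\in(0,1)$ and a positive integer $k$, the set of $k$-dimensional fractional order positive definite matrices is $\mathbb{P}_\alpha^{k\times k}=\Big\{\sin\big(\tfrac{\alpha\pi}{2}\big)X+\cos\big(\tfrac{\alpha\pi}{2}\big)Y:\ X,Y\in\mathbb{R}^{k\times k},\ \begin{bmatrix}X&Y\\-Y&X\end{bmatrix}>0\Big\}$, where ''$>0$'' means the (symmetric) block matrix is positive definite. *)

From mathcomp Require Import all_boot all_order all_algebra.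
From mathcomp Require Import all_classical all_reals all_analysis.
Set Implicit Arguments. Unset Strict Implicit. Unset Printing Implicit Defensive.
Import Order.TTheory GRing.Theory Num.Theory.
Local Open Scope ring_scope.

Definition posdef (R : realType) (m : nat) (A : 'M[R]_m) : Prop :=
  A^T = A /\ forall x : 'cV[R]_m, x != 0 -> 0 < (x^T *m A *m x) ord0 ord0.

Definition frac_posdef (R : realType) (alpha : R) (k : nat) (P : 'M[R]_k) : Prop :=
  exists X Y : 'M[R]_k,
    posdef (block_mx X Y (- Y) X) /\
    P = sin (alpha * pi / 2) *: X + cos (alpha * pi / 2) *: Y.

From mathcomp Require Import all_boot all_order all_algebra.
From mathcomp Require Import all_classical all_reals all_analysis.
Import Order.TTheory GRing.Theory Num.Theory.
Local Open Scope ring_scope.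

(* Congruence by a matrix of full column rank preserves positive definiteness,
   since it keeps nonzero vectors nonzero.  Writing P = s X + c Y, the
   congruence M^T P M splits as s (M^T X M) + c (M^T Y M), and the block
   matrix built from M^T X M and M^T Y M is the congruence of the block matrix
   built from X and Y by diag(M, M), which has full column rank 2r. *)

Lemma posdef_congr (R : realType) n r (A : 'M[R]_n) (B : 'M[R]_(n, r)) :
  posdef A -> \rank B = r -> posdef (B^T *m A *m B).
Proof.
move=> [A_sym A_pos] rkB; split; first by rewrite !trmx_mul trmxK A_sym mulmxA.
move=> x x_neq0.
have Bx_neq0 : B *m x != 0.
  have free_trB : row_free B^T by rewrite /row_free mxrank_tr rkB.
  by rewrite -trmx_eq0 trmx_mul mulmx_free_eq0 // trmx_eq0.
have -> : x^T *m (B^T *m A *m B) *m x = (B *m x)^T *m A *m (B *m x).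
  by rewrite trmx_mul !mulmxA.
exact: A_pos.
Qed.

Lemma diag_block_congr (R : pzRingType) n r (M : 'M[R]_(n, r))
    (X Y : 'M[R]_n) :
  let D := block_mx M 0 0 M in
  D^T *m block_mx X Y (- Y) X *m D =
  block_mx (M^T *m X *m M) (M^T *m Y *m M)
           (- (M^T *m Y *m M)) (M^T *m X *m M).
Proof.
rewrite /= tr_block_mx !trmx0 !mulmx_block.
by rewrite !mulmx0 !mul0mx !addr0 !add0r !mulmxN !mulNmx.
Qed.

Theorem theorem1 (R : realType) (alpha : R) (n r : nat)
  (halpha : 0 < alpha < 1) (hr : (1 <= r)%N) (hrn : (r <= n)%N)
  (P : 'M[R]_n) (M : 'M[R]_(n, r)) :
  frac_posdef alpha P -> \rank M = r -> frac_posdef alpha (M^T *m P *m M).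
Proof.
move=> [X [Y [XY_pos ->]]] rkM.
exists (M^T *m X *m M), (M^T *m Y *m M); split.
  rewrite -diag_block_congr; apply: posdef_congr => //.
  by rewrite rank_diag_block_mx rkM.
by rewrite mulmxDr mulmxDl -!scalemxAr -!scalemxAl.
Qed.
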